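(* The hereditary class property ''nowhere dense'' (the set of hereditary nowhere dense classes) is a decomposition horizon.
   Context: Graphs are finite and simple. For a graph $H$ and integer $p\ge0$, $H^{(p)}$ is obtained by replacing each edge of $H$ by a path of length $p+1$. A class $\mathscr C$ is nowhere dense if there is a function $f_\omega:\mathbb N\to\mathbb N$ such that whenever $H^{(p)}$ is a subgraph of a graph in $\mathscr C$, the clique number of $H$ is at most $f_\omega(p)$. A hereditary class is a class closed under isomorphism and induced subgraphs; a hereditary class property is a set $\Pi$ of hereditary classes closed under passing to hereditary subclasses. For non-decreasing $f$ and positive integer $p$, $\mathscr C$ has an $f$-bounded $\Pi$-decomposition with parameter $p$ if there is $\mathscr D_p\in\Pi$ such that every $G\in\mathscr C$ has a partition $V_1,\dots,V_N$ of $V(G)$, $N\le f(|G|)$, with $G[V_{i_1}\cup\dots\cup V_{i_p}]\in\mathscr D_p$ for all $i_1,\dots,i_p\in[N]$. $\Pi^\ast$ is the set of hereditary classes that, for every positive integer $p$, have such a decomposition for some non-decreasing $f$ with $f(n)=n^{o(1)}$. $\Pi$ is a decomposition horizon if $\Pi^\ast=\Pi$. *)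

From Stdlib Require Import Reals.
From mathcomp Require Import all_boot.

Set Implicit Arguments.
Unset Strict Implicit.
Unset Printing Implicit Defensive.

(* A finite simple graph: a finite vertex type with a raw relation; the edge
   relation is its symmetric, irreflexive closure, so every record is a simple
   graph and every simple graph arises this way. *)
Record graph := Graph { vert : finType; raw : rel vert }.

Definition edge (G : graph) : rel (vert G) :=
  fun x y => (x != y) && (raw x y || raw y x).

Definition order (G : graph) : nat := #|vert G|.

Definition subgraph (H G : graph) : Prop :=
  exists f : vert H -> vert G, injective f /\
    forall x y, edge x y -> edge (f x) (f y).

Definition induced_subgraph (H G : graph) : Prop :=
  exists f : vert H -> vert G, injective f /\
    forall x y, edge (f x) (f y) = edge x y.

Definition induced (G : graph) (S : {set vert G}) : graph :=
  @Graph {x : vert G | x \in S} (fun x y => edge (val x) (val y)).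

Definition is_clique (G : graph) (S : {set vert G}) : bool :=
  [forall x in S, forall y in S, (x != y) ==> edge x y].

Definition clique_number (G : graph) : nat :=
  \max_(S : {set vert G} | is_clique S) #|S|.

(* The p-subdivision H^(p): each edge uv (oriented so that
   enum_rank u < enum_rank v) is replaced by the path
   u - (uv,0) - (uv,1) - ... - (uv,p-1) - v of length p+1. *)
Definition sub_edge (H : graph) : pred (vert H * vert H) :=
  fun e => edge e.1 e.2 && (enum_rank e.1 < enum_rank e.2).

Definition sdv_type (H : graph) (p : nat) : finType :=
  (vert H + ({e : vert H * vert H | sub_edge e} * 'I_p))%type.

Definition sdv_rel (H : graph) (p : nat) : rel (sdv_type H p) :=
  fun a b =>
    match a, b with
    | inl u, inl v => (p == 0) && edge u v
    | inl u, inr t | inr t, inl u =>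
        ((u == (val t.1).1) && (val t.2 == 0)) ||
        ((u == (val t.1).2) && (val t.2 == p.-1))
    | inr s, inr t =>
        (s.1 == t.1) && ((val s.2).+1 == val t.2)
    end.

Definition subdivision (H : graph) (p : nat) : graph :=
  @Graph (sdv_type H p) (@sdv_rel H p).

Definition gclass := graph -> Prop.

Definition hereditary (C : gclass) : Prop :=
  forall G H : graph, C G -> induced_subgraph H G -> C H.

Definition nowhere_dense (C : gclass) : Prop :=
  exists fw : nat -> nat, forall (p : nat) (H G : graph),
    C G -> subgraph (subdivision H p) G -> clique_number H <= fw p.

Definition class_property := gclass -> Prop.

Definition hereditary_class_property (Pi : class_property) : Prop :=
  (forall C, Pi C -> hereditary C) /\
  (forall C D, Pi C -> hereditary D -> (forall G, D G -> C G) -> Pi D).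

Definition ND : class_property := fun C => hereditary C /\ nowhere_dense C.

(* f(n) = n^{o(1)}: for every eps > 0, eventually f(n) <= n^eps *)
Definition subpoly (f : nat -> nat) : Prop :=
  forall eps : R, Rlt R0 eps ->
    exists n0 : nat, forall n : nat, n0 <= n ->
      Rle (INR (f n)) (Rpower (INR n) eps).

Definition nondecreasing (f : nat -> nat) : Prop :=
  forall m n, m <= n -> f m <= f n.

(* C has an f-bounded Pi-decomposition with parameter p.  A partition
   V_1,...,V_N of V(G) is given by the map col : V(G) -> 'I_N
   (V_i = col^{-1}(i)); i_1,...,i_p is a map 'I_p -> 'I_N. *)
Definition has_decomposition (Pi : class_property) (C : gclass)
    (f : nat -> nat) (p : nat) : Prop :=
  exists Dp : gclass, Pi Dp /\
    forall G : graph, C G ->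
      exists (N : nat) (col : vert G -> 'I_N), N <= f (order G) /\
        forall idx : 'I_p -> 'I_N,
          Dp (induced [set v | col v \in codom idx]).

Definition Pi_star (Pi : class_property) : class_property :=
  fun C => hereditary C /\
    forall p : nat, 0 < p ->
      exists f : nat -> nat, nondecreasing f /\ subpoly f /\
        has_decomposition Pi C f p.

Definition decomposition_horizon (Pi : class_property) : Prop :=
  forall C : gclass, Pi_star Pi C <-> Pi C.

(* Suppose [C] has, for every [p], decompositions into [n^o(1)] parts any [p]
   of which induce a graph of a fixed nowhere dense class [D_p], but [C] is
   not nowhere dense: some graph of [C] contains an [r]-subdivision of a huge
   clique [K_k].  Restricted to that subdivision, the graph has order
   polynomial in [k], so a decomposition with [p = r + 2] has only [k^o(1)]
   parts.  Colour the path joining two branch vertices by the tuple of parts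
   of its [r + 2] vertices; a counting argument gives [m] branch vertices [A]
   and [m^2] branch vertices [B] all of whose connecting paths get the same
   colour [t].  Routing each edge of [K_m] from [A] through its own vertex of
   [B] and back to [A] yields a [(2r + 1)]-subdivision of [K_m] in the union of
   the [r + 2] parts named by [t], which lies in [D_p]; for [m] large this
   contradicts the nowhere density of [D_p].  The converse inclusion is
   witnessed by the trivial decomposition into one part. *)

From Stdlib Require Import Reals Lra ClassicalEpsilon.
From Pilot Require Import Defs.
From mathcomp Require Import all_boot zify.

Set Implicit Arguments.
Unset Strict Implicit.
Unset Printing Implicit Defensive.

(** * Graphs, cliques and subdivisions *)

Lemma edgeC (G : graph) (x y : vert G) : edge x y = edge y x.
Proof. by rewrite /edge eq_sym orbC. Qed.

Lemma edge_neq (G : graph) (x y : vert G) : edge x y -> x != y.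
Proof. by case/andP. Qed.

Lemma edge_induced (G : graph) (S : {set vert G}) (x y : vert (induced S)) :
  edge x y = edge (val x) (val y).
Proof.
rewrite {1}/edge /= edgeC orbb.
case E: (edge (val y) (val x)); last by rewrite andbF.
by rewrite andbT; apply: contra (edge_neq E) => /eqP ->.
Qed.

Lemma induced_subgraph_induced (G : graph) (S : {set vert G}) :
  induced_subgraph (induced S) G.
Proof. by exists val; split; [exact: val_inj | move=> x y; rewrite edge_induced]. Qed.

Lemma order_induced (G : graph) (S : {set vert G}) : Defs.order (induced S) = #|S|.
Proof. by rewrite /Defs.order card_sig; apply: eq_card. Qed.

Lemma clique_number_enum (H : graph) : exists e : 'I_(clique_number H) -> vert H,
  injective e /\ forall x y, x != y -> edge (e x) (e y).
Proof.
have cl0 : @is_clique H set0 by apply/forallP => x; apply/implyP; rewrite inE.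
have [Q [clQ cardQ]] : exists Q : {set vert H}, is_clique Q /\ #|Q| = clique_number H.
  exists [arg max_(S > set0 | @is_clique H S) #|S|].
  rewrite /clique_number (bigmax_eq_arg set0) //; split=> //.
  by case: arg_maxnP.
exists (fun x => enum_val (cast_ord (esym cardQ) x)); split.
  by move=> x y /enum_val_inj /cast_ord_inj.
move=> x y nxy; set u := enum_val _; set v := enum_val _.
have uQ : u \in Q by exact: enum_valP.
have vQ : v \in Q by exact: enum_valP.
have /forall_inP /(_ v vQ) /implyP := forall_inP clQ u uQ.
by apply; apply: contra nxy => /eqP /enum_val_inj /cast_ord_inj ->.
Qed.

Definition complete_graph (m : nat) : graph := @Graph 'I_m (fun _ _ => true).

Lemma edge_complete m (i j : 'I_m) : @edge (complete_graph m) i j = (i != j).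
Proof. by rewrite /edge /= andbT. Qed.

Lemma clique_number_complete m : m <= clique_number (complete_graph m).
Proof.
have clT : @is_clique (complete_graph m) setT.
  by apply/forall_inP => x _; apply/forall_inP => y _; rewrite edge_complete implybb.
by rewrite -[X in X <= _]card_ord -cardsT; exact: (leq_bigmax_cond _ clT).
Qed.

Notation sub_edges H := {e : vert H * vert H | @sub_edge H e}.

Section SubdivisionPath.
Variables (H : graph) (p : nat).

Lemma sdv_rel_irr (u : vert (subdivision H p)) : ~~ sdv_rel u u.
Proof.
case: u => [u | [s i]] /=; first by rewrite /edge eqxx andbF.
by rewrite eqxx /=; apply/eqP; lia.
Qed.

Lemma edge_subdivision (u v : vert (subdivision H p)) :
  edge u v = sdv_rel u v || sdv_rel v u.
Proof.
rewrite /edge /=; case: eqP => [-> | _] //=.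
by rewrite orbb (negPf (sdv_rel_irr v)).
Qed.

Definition sdv_path (s : sub_edges H) (i : 'I_p.+2) : vert (subdivision H p) :=
  if i == 0 :> nat then inl (val s).1
  else if insub i.-1 is Some j then inr (s, j) else inl (val s).2.

Lemma sdv_path_first s : sdv_path s ord0 = inl (val s).1.
Proof. by []. Qed.

Lemma sdv_path_last s : sdv_path s ord_max = inl (val s).2.
Proof. by rewrite /sdv_path /= insubN // ltnn. Qed.

Lemma sdv_path_inner s (i : 'I_p.+2) : 0 < i < p.+1 ->
  exists2 j : 'I_p, sdv_path s i = inr (s, j) & val j = i.-1.
Proof.
case/andP => i_gt0 i_le; have ip : i.-1 < p by lia.
exists (Ordinal ip) => //.
rewrite /sdv_path (insubT (fun n => n < p) ip).
by have -> : (i == 0 :> nat) = false by lia.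
Qed.

Lemma sdv_path_inner_neq s (i : 'I_p.+2) v : 0 < i < p.+1 -> sdv_path s i != inl v.
Proof. by case/(sdv_path_inner s) => j ->. Qed.

Lemma sdv_path_edge s (i j : 'I_p.+2) : j = i.+1 :> nat ->
  edge (sdv_path s i) (sdv_path s j).
Proof.
move=> ji; have jp := ltn_ord j; rewrite edge_subdivision.
have [i0 | i_gt0] := posnP i.
  rewrite (_ : i = ord0); last exact: ord_inj.
  have [p0 | p_gt0] := posnP p.
    rewrite (_ : j = ord_max); last by apply: ord_inj; rewrite ji i0 p0.
    by rewrite sdv_path_last /= p0; case: s => [[u v] /= /andP [->]].
  have /(sdv_path_inner s) [l -> /= l0] : 0 < j < p.+1 by lia.
  by rewrite eqxx l0 ji i0.
have /(sdv_path_inner s) [l -> /= li] : 0 < i < p.+1 by lia.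
have [j_le | j_last] := ltnP j p.+1.
  have /(sdv_path_inner s) [l' -> /= l'j] : 0 < j < p.+1 by lia.
  by rewrite eqxx l'j li ji /=; apply/orP; left; apply/eqP; lia.
rewrite (_ : j = ord_max) ?sdv_path_last /=; last by apply: ord_inj => /=; lia.
by rewrite eqxx li /=; apply/orP; right; apply/eqP; lia.
Qed.

Lemma sdv_path_inj s s' (i j : 'I_p.+2) : 0 < i < p.+1 ->
  sdv_path s i = sdv_path s' j -> s = s' /\ i = j.
Proof.
move=> hi; have [l -> li] := sdv_path_inner s hi.
have [hj | hj] := boolP (0 < j < p.+1).
  have [l' -> l'j] := sdv_path_inner s' hj.
  by case=> -> ll'; split=> //; apply: ord_inj; move: hi hj; rewrite -ll' li in l'j; lia.
rewrite /sdv_path; case: eqP => // j_neq0; case: insubP => // u ju _.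
by move: hj; lia.
Qed.

End SubdivisionPath.

(** * Subdivided cliques *)

(* [pi x b] is a path of length [r + 1] from [beta x] to [beta b]; the paths
   of distinct pairs {x, b} are internally disjoint and avoid all branch
   vertices, i.e. [beta] and [pi] form a subdivided [k]-clique. *)
Record path_system (G : graph) (r k : nat) (beta : 'I_k -> vert G)
    (pi : 'I_k -> 'I_k -> 'I_r.+2 -> vert G) : Prop := PathSystem {
  branch_inj : injective beta;
  path_first : forall x b, x != b -> pi x b ord0 = beta x;
  path_last : forall x b, x != b -> pi x b ord_max = beta b;
  path_edge : forall x b (i j : 'I_r.+2), x != b -> j = i.+1 :> nat ->
    edge (pi x b i) (pi x b j);
  path_inner_inj : forall x b x' b' (i j : 'I_r.+2), x != b -> x' != b' ->
    0 < i < r.+1 -> pi x b i = pi x' b' j ->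
    (x = x' /\ b = b' /\ i = j) \/ (x = b' /\ b = x');
  path_inner_branch : forall x b (i : 'I_r.+2) y, x != b -> 0 < i < r.+1 ->
    pi x b i != beta y
}.

Lemma path_system_order G r k beta pi : @path_system G r k beta pi -> k <= Defs.order G.
Proof. by case=> beta_inj *; rewrite -[k]card_ord; exact: leq_card beta_inj. Qed.

Section PathSystemMorphism.
Variables (G G' : graph) (phi : vert G -> vert G') (r k : nat).
Variables (beta : 'I_k -> vert G) (pi : 'I_k -> 'I_k -> 'I_r.+2 -> vert G).
Hypothesis phi_inj : injective phi.

Lemma path_system_map : (forall u v, edge u v -> edge (phi u) (phi v)) ->
  path_system beta pi -> path_system (phi \o beta) (fun x b i => phi (pi x b i)).
Proof.
move=> phi_edge [beta_inj first last hedge inner_inj inner_branch]; split.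
- exact: inj_comp.
- by move=> x b nxb /=; rewrite first.
- by move=> x b nxb /=; rewrite last.
- by move=> x b i j nxb ji; apply/phi_edge/hedge.
- by move=> x b x' b' i j nxb nxb' hi /phi_inj; apply: inner_inj.
- by move=> x b i y nxb hi; rewrite (inj_eq phi_inj) inner_branch.
Qed.

Lemma path_system_comap : (forall u v, edge (phi u) (phi v) -> edge u v) ->
  path_system (phi \o beta) (fun x b i => phi (pi x b i)) -> path_system beta pi.
Proof.
move=> phi_edge [beta_inj first last hedge inner_inj inner_branch]; split.
- by move=> x y /(congr1 phi) /beta_inj.
- by move=> x b /first /phi_inj.
- by move=> x b /last /phi_inj.
- by move=> x b i j nxb ji; apply/phi_edge/hedge.
- by move=> x b x' b' i j nxb nxb' hi eq_pi; apply: inner_inj; rewrite ?eq_pi.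
- by move=> x b i y nxb hi; rewrite -(inj_eq phi_inj) inner_branch.
Qed.

End PathSystemMorphism.

Section CliquePaths.
Variables (H : graph) (r k : nat) (e : 'I_k -> vert H).
Hypothesis e_inj : injective e.
Hypothesis e_edge : forall x b, x != b -> edge (e x) (e b).

Definition enum_rank_lt x b := enum_rank (e x) < enum_rank (e b).

Definition oriented_pair x b : vert H * vert H :=
  if enum_rank_lt x b then (e x, e b) else (e b, e x).

Definition clique_path x b (i : 'I_r.+2) : vert (subdivision H r) :=
  if insub (oriented_pair x b) is Some s then sdv_path s (if enum_rank_lt x b then i else rev_ord i)
  else inl (e x).

Lemma enum_rank_lt_neq x b : x != b -> enum_rank_lt b x = ~~ enum_rank_lt x b.
Proof.
move=> nxb; rewrite /enum_rank_lt.
have : nat_of_ord (enum_rank (e x)) != enum_rank (e b).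
  by apply: contra nxb => /eqP /val_inj /enum_rank_inj /e_inj ->.
lia.
Qed.

Lemma clique_path_sdv x b : x != b -> exists s : sub_edges H,
  val s = oriented_pair x b /\
  forall i, clique_path x b i = sdv_path s (if enum_rank_lt x b then i else rev_ord i).
Proof.
move=> nxb.
have s_edge : sub_edge (oriented_pair x b).
  rewrite /sub_edge /oriented_pair; case: ifP => [xb | /negbT xb] /=.
    by rewrite e_edge.
  by rewrite e_edge 1?eq_sym //; have := enum_rank_lt_neq nxb; rewrite xb.
by exists (Sub _ s_edge); split => // i; rewrite /clique_path insubT.
Qed.

Lemma clique_path_system :
  path_system (fun x => inl (e x) : vert (subdivision H r)) clique_path.
Proof.
split.
- by move=> x y [] /e_inj.
- move=> x b /clique_path_sdv [s [vs ->]].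
  move: vs; rewrite /oriented_pair; case: (enum_rank_lt x b) => vs.
    by rewrite sdv_path_first vs.
  by rewrite (_ : rev_ord _ = ord_max) ?sdv_path_last ?vs //; apply: ord_inj; rewrite /= subn1.
- move=> x b /clique_path_sdv [s [vs ->]].
  move: vs; rewrite /oriented_pair; case: (enum_rank_lt x b) => vs.
    by rewrite sdv_path_last vs.
  by rewrite (_ : rev_ord _ = ord0) ?sdv_path_first ?vs //; apply: ord_inj; rewrite /= subnn.
- move=> x b i j /clique_path_sdv [s [_ cp]] ji; rewrite !cp.
  case: (enum_rank_lt x b); first exact: sdv_path_edge ji.
  by rewrite edgeC; apply: sdv_path_edge; rewrite /= ji; have := ltn_ord j; lia.
- move=> x b x' b' i j /clique_path_sdv [s [vs ->]] /clique_path_sdv [s' [vs' ->]] hi.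
  have hI : 0 < (if enum_rank_lt x b then i else rev_ord i) < r.+1.
    by case: (enum_rank_lt x b) => //=; have := ltn_ord i; lia.
  case/(sdv_path_inj hI) => ss' eqI; move: vs vs'; rewrite -ss' /oriented_pair.
  case: (enum_rank_lt x b) eqI; case: (enum_rank_lt x' b') => eqI -> [/e_inj -> /e_inj ->];
    by [left; do 2!split => //; apply: rev_ord_inj | right].
- move=> x b i y /clique_path_sdv [s [_ ->]] hi.
  by apply: sdv_path_inner_neq; case: (enum_rank_lt x b) => //=; have := ltn_ord i; lia.
Qed.

End CliquePaths.

Lemma subdivided_clique_paths (H G : graph) r : subgraph (subdivision H r) G ->
  exists (S : {set vert G}) beta pi,
    #|S| <= clique_number H * clique_number H * r.+3 /\
    @path_system (induced S) r (clique_number H) beta pi.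
Proof.
case=> phi [phi_inj phi_edge]; have [e [e_inj e_edge]] := clique_number_enum H.
set k := clique_number H in e e_inj e_edge *.
pose beta x := phi (inl (e x)); pose pi x b (i : 'I_r.+2) := phi (clique_path e x b i).
have hpi : path_system beta pi :=
  path_system_map phi_inj phi_edge (clique_path_system r e_inj e_edge).
pose S := [set beta x | x in 'I_k] :|: [set pi t.1.1 t.1.2 t.2 | t in setT].
have betaS x : beta x \in S by rewrite inE imset_f.
have piS x b i : pi x b i \in S.
  by rewrite inE (imset_f (fun t => pi t.1.1 t.1.2 t.2) (in_setT (x, b, i))) orbT.
exists S, (fun x => Sub (beta x) (betaS x)), (fun x b i => Sub (pi x b i) (piS x b i)).
split; last first.
  apply: (@path_system_comap (induced S) G val _ _ _ _ val_inj); last exact: hpi.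
  by move=> u v; rewrite edge_induced.
apply: leq_trans (leq_card_setU _ _) _.
rewrite mulnSr addnC leq_add //; apply: leq_trans (leq_imset_card _ _) _.
  by rewrite cardsT !card_prod !card_ord.
by rewrite card_ord; nia.
Qed.

(** * A bipartite counting lemma *)

Lemma leq_expn2r e a b : a <= b -> a ^ e <= b ^ e.
Proof. by move=> ab; elim: e => // e IH; rewrite !expnS leq_mul. Qed.

Lemma exists_above_average (I : finType) (i0 : I) (F : I -> nat) :
  exists i, \sum_j F j <= #|I| * F i.
Proof.
have [i _ i_max] := @arg_maxnP I i0 predT F isT.
by exists i; rewrite -sum_nat_const leq_sum // => j _; exact: i_max.
Qed.

Lemma sum_card_fibres (I T : finType) (A : {set I}) (g : I -> T) :
  \sum_t #|[set x in A | g x == t]| = #|A|.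
Proof.
rewrite -sum1_card (partition_big g predT) //=.
by apply: eq_bigr => t _; rewrite -sum1_card; apply: eq_bigl => x; rewrite !inE.
Qed.

Lemma double_count (I J : finType) (B : {set J}) (R : I -> J -> bool) :
  \sum_i #|[set j in B | R i j]| = \sum_(j in B) #|[set i | R i j]|.
Proof.
have card_sum (T : finType) (P : pred T) : #|[set x | P x]| = \sum_x P x.
  by rewrite -sum1_card big_mkcond; apply: eq_bigr => x _; rewrite inE; case: (P x).
under eq_bigr do rewrite card_sum.
rewrite exchange_big [RHS]big_mkcond /=; apply: eq_bigr => j _.
rewrite card_sum; case: (j \in B) => /=; last by rewrite big1.
by apply: eq_bigr => i _.
Qed.

Lemma injection_into_set (T I : finType) (B : {set I}) : #|T| <= #|B| ->
  exists f : T -> I, injective f /\ forall x, f x \in B.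
Proof.
move=> TB; exists (fun x => enum_val (widen_ord TB (enum_rank x))); split.
  by move=> x y /enum_val_inj [] /ord_inj /enum_rank_inj.
by move=> x; exact: enum_valP.
Qed.

Section Greedy.
Variables (k D : nat) (B0 : {set 'I_k}) (X : 'I_k -> {set 'I_k}).
Hypothesis large_X : forall b, b \in B0 -> D <= #|X b|.

Lemma greedy_step (A B : {set 'I_k}) : 0 < #|B| -> B \subset B0 ->
  exists x, #|B| * (D - #|A|) <= k * #|[set b in B | x \in X b :\: A]|.
Proof.
move=> /card_gt0P [b0 _] sBB0.
have [x hx] := exists_above_average b0 (fun x => #|[set b in B | x \in X b :\: A]|).
exists x; rewrite card_ord in hx; apply: leq_trans hx.
rewrite (double_count B (fun x b => x \in X b :\: A)) -sum_nat_const.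
apply: leq_sum => b bB; rewrite (_ : [set y | _] = X b :\: A); last by apply/setP => y; rewrite inE.
have := large_X (subsetP sBB0 b bB); have := subset_leq_card (subsetIr (X b) A).
by rewrite cardsD; lia.
Qed.

Lemma greedy m : m < D -> 0 < #|B0| -> exists A B : {set 'I_k},
  [/\ #|A| = m, B \subset B0, (forall b, b \in B -> A \subset X b) &
      #|B0| * (D - m) ^ m <= k ^ m * #|B|].
Proof.
move=> mD B0_gt0.
suff /(_ m (leqnn m)) : forall i, i <= m -> exists A B : {set 'I_k},
  [/\ #|A| = i, B \subset B0, (forall b, b \in B -> A \subset X b) &
      #|B0| * (D - m) ^ i <= k ^ i * #|B|] by [].
elim=> [_ | i IH im].
  by exists set0, B0; rewrite cards0 expn0 muln1 mul1n; split=> // b _; exact: sub0set.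
have [A [B [cardA sBB0 sAX hB]]] := IH (ltnW im).
have B_gt0 : 0 < #|B|.
  have : 0 < k ^ i * #|B| by apply: leq_trans hB; rewrite muln_gt0 B0_gt0 expn_gt0 subn_gt0 mD.
  by rewrite muln_gt0 => /andP [].
have [x hx] := greedy_step A B_gt0 sBB0.
set B' := [set b in B | _] in hx.
have /card_gt0P [b' b'B'] : 0 < #|B'| by rewrite cardA in hx; nia.
have xA : x \notin A by move: b'B'; rewrite !inE => /and3P [].
exists (x |: A), B'; split.
- by rewrite cardsU1 xA cardA.
- by apply: subset_trans sBB0; apply/subsetP => b; rewrite inE => /andP [].
- move=> b; rewrite !inE => /andP [bB /andP [_ xX]].
  by rewrite subUset sub1set xX sAX.
- rewrite !expnSr mulnA; apply: leq_trans (leq_mul hB (leqnn (D - m))) _.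
  rewrite -!mulnA leq_mul2l; apply/orP; right; apply: leq_trans hx.
  by rewrite leq_mul2l cardA leq_sub2l ?orbT // ltnW.
Qed.

End Greedy.

Lemma greedy_bounds k m M B0 D : 0 < M -> k <= M * B0 -> k <= M * D.+1 ->
  2 ^ m.+1 * m.+1 ^ 2 * M ^ m.+1 <= k ->
  [/\ m < D, 0 < B0 & m * m * k ^ m <= B0 * (D - m) ^ m].
Proof.
move=> M_gt0 kB0 kD; rewrite -mulnn !expnS.
set P := 2 ^ m; set Q := M ^ m; set K := k ^ m; set R := (D - m) ^ m.
have P_gt0 : 0 < P by rewrite expn_gt0.
have Q_gt0 : 0 < Q by rewrite expn_gt0 M_gt0.
move=> hk.
have k_half : 2 * (M * m.+1) <= k.
  apply: leq_trans hk.
  have -> : 2 * P * (m.+1 * m.+1) * (M * Q) = P * m.+1 * Q * (2 * (M * m.+1)) by nia.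
  by rewrite leq_pmull // !muln_gt0 P_gt0 Q_gt0.
have k_le : k <= 2 * (M * (D - m)) by nia.
have k_gt0 : 0 < k by nia.
have K_le : K <= P * Q * R by rewrite /K /P /Q /R -!expnMn leq_expn2r // -mulnA.
split; [nia | nia | ].
have : (P * Q * M) * (m * m * K) <= (P * Q * M) * (B0 * R).
  apply: (@leq_trans (k * K)); first by rewrite mulnA leq_mul2r; nia.
  by apply: (@leq_trans (M * B0 * (P * Q * R))); [exact: leq_mul | nia].
by rewrite leq_pmul2l // !muln_gt0 P_gt0 Q_gt0.
Qed.

Lemma bipartite_monochromatic k m (T : finType) (t0 : T) (tau : 'I_k -> 'I_k -> T) :
  2 ^ m.+1 * m.+1 ^ 2 * #|T| ^ m.+1 <= k ->
  exists t (A B : {set 'I_k}), [/\ #|A| = m, m * m <= #|B| &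
    forall x b, x \in A -> b \in B -> x != b /\ tau x b = t].
Proof.
move=> hk; have T_gt0 : 0 < #|T| by apply/card_gt0P; exists t0.
pose X t b := [set x in [set~ b] | tau x b == t].
pose top b := [arg max_(t > t0) #|X t b|].
pose D := k.-1 %/ #|T|.
have large_top b : D <= #|X (top b) b|.
  have : k.-1 <= #|T| * #|X (top b) b|.
    have -> : k.-1 = #|[set~ b]| by rewrite cardsC1 card_ord.
    rewrite -(sum_card_fibres _ (fun x => tau x b)).
    rewrite -sum_nat_const; apply: leq_sum => t _.
    by rewrite /top; case: arg_maxnP => // t' _; apply.
  by move=> h; rewrite /D -(mulKn #|X (top b) b| T_gt0) leq_div2r.
have [t ht] := exists_above_average t0 (fun t => #|[set b | top b == t]|).
pose B0 := [set b | top b == t].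
have kB0 : k <= #|T| * #|B0|.
  apply: leq_trans ht; rewrite -[k in k <= _]card_ord -cardsT -(sum_card_fibres _ top).
  by apply/eq_leq/eq_bigr => j _; apply: eq_card => b; rewrite !inE.
have kD : k <= #|T| * D.+1 by rewrite mulnC /D; have := ltn_ceil k.-1 T_gt0; case: (k).
have [mD B0_gt0 hB0] := greedy_bounds T_gt0 kB0 kD hk.
have large_X b : b \in B0 -> D <= #|X t b| by rewrite inE => /eqP <-.
have [A [B [cardA _ sAX hB]]] := greedy large_X mD B0_gt0.
exists t, A, B; split=> //.
  have Km_gt0 : 0 < k ^ m by rewrite expn_gt0; move: kB0 mD; nia.
  by rewrite -(leq_pmul2r Km_gt0) (mulnC #|B|); apply: leq_trans hB0 _.
by move=> x b xA /sAX /subsetP /(_ x xA); rewrite !inE => /andP [-> /eqP].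
Qed.

(** * Routing a subdivided complete graph *)

Section SubdividedComplete.
Variables (G : graph) (r k m : nat) (beta : 'I_k -> vert G).
Variable pi : 'I_k -> 'I_k -> 'I_r.+2 -> vert G.
Hypothesis hpi : path_system beta pi.
Variables (branch : 'I_m -> 'I_k) (hub : sub_edges (complete_graph m) -> 'I_k).
Hypotheses (branch_inj : injective branch) (hub_inj : injective hub).
Hypothesis branch_hub : forall i s, branch i != hub s.

(* The [q]-th inner vertex of the subdivided edge [s] is routed along the path
   from [branch s.1] to [hub s] for [q <= r], and back along the path from
   [branch s.2] to [hub s] otherwise. *)
Definition route_pos (s : sub_edges (complete_graph m)) (q : nat) : 'I_m * nat :=
  if q <= r then ((val s).1, q.+1) else ((val s).2, (r + r).+1 - q).

Definition route (v : vert (subdivision (complete_graph m) (r + r).+1)) : vert G :=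
  match v with
  | inl i => beta (branch i)
  | inr (s, q) => pi (branch (route_pos s q).1) (hub s) (inord (route_pos s q).2)
  end.
Arguments route : simpl never.

Lemma sub_edge_complete_neq (s : sub_edges (complete_graph m)) : (val s).1 != (val s).2.
Proof. by case: s => [[i j]] /= /andP [/edge_neq]. Qed.

Lemma route_pos_inj s (q q' : 'I_(r + r).+1) : route_pos s q = route_pos s q' -> q = q'.
Proof.
move: (ltn_ord q) (ltn_ord q') (sub_edge_complete_neq s); rewrite /route_pos.
case: (leqP q r) => hq; case: (leqP q' r) => hq' lt_q lt_q' neq /pair_equal_spec [e1 e2];
  by [apply: ord_inj; lia | move: neq; rewrite e1 eqxx].
Qed.

Lemma route_pos_range s (q : 'I_(r + r).+1) : 0 < (route_pos s q).2 <= r.+1.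
Proof. by have := ltn_ord q; rewrite /route_pos; case: (leqP q r) => /=; lia. Qed.

Lemma route_first s (q : 'I_(r + r).+1) : q <= r ->
  route (inr (s, q)) = pi (branch (val s).1) (hub s) (inord q.+1).
Proof. by move=> hq; rewrite /route /route_pos hq. Qed.

Lemma route_second s (q : 'I_(r + r).+1) : r <= q ->
  route (inr (s, q)) = pi (branch (val s).2) (hub s) (inord ((r + r).+1 - q)).
Proof.
move=> hq; rewrite /route /route_pos; case: (leqP q r) => //= q_le.
have to_max n : n = r.+1 -> inord n = ord_max :> 'I_r.+2.
  by move=> ->; apply: ord_inj; rewrite inordK.
by rewrite !to_max ?(path_last hpi) //; lia.
Qed.

Lemma route_hub s (q : 'I_(r + r).+1) : q = r :> nat -> route (inr (s, q)) = beta (hub s).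
Proof.
move=> qr; rewrite route_first ?qr // (_ : inord _ = ord_max) ?(path_last hpi) //.
by apply: ord_inj; rewrite inordK.
Qed.

Lemma route_inner s (q : 'I_(r + r).+1) : q != r :> nat ->
  0 < (inord (route_pos s q).2 : 'I_r.+2) < r.+1.
Proof.
move=> qr; have hr := route_pos_range s q; rewrite inordK; last lia.
by move: hr qr (ltn_ord q); rewrite /route_pos; case: (leqP q r) => /=; lia.
Qed.

Lemma route_inj : injective route.
Proof.
have [beta_inj _ _ _ inner_inj inner_branch] := hpi.
have inner_neq s (q : 'I_(r + r).+1) y : q != r :> nat -> route (inr (s, q)) != beta y.
  by move=> qr; apply: inner_branch (route_inner s qr).
move=> [i | [s q]] [i' | [s' q']].
- by move=> /beta_inj /branch_inj ->.
- have [qr | /(inner_neq s' q' (branch i))] := eqVneq (q' : nat) r; last by rewrite eq_sym => /eqP.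
  by rewrite route_hub // => /beta_inj /eqP; rewrite (negPf (branch_hub _ _)).
- have [qr | /(inner_neq s q (branch i'))] := eqVneq (q : nat) r; last by move/eqP.
  by rewrite route_hub // => /beta_inj /eqP; rewrite eq_sym (negPf (branch_hub _ _)).
have [qr | qr] := eqVneq (q : nat) r; have [q'r | q'r] := eqVneq (q' : nat) r.
- rewrite !route_hub // => /beta_inj /hub_inj ss'.
  by congr inr; congr pair => //; apply: ord_inj; rewrite qr q'r.
- by rewrite route_hub // => /eqP; rewrite eq_sym (negPf (inner_neq _ _ _ q'r)).
- by rewrite [route (inr (s', q'))]route_hub // => /eqP; rewrite (negPf (inner_neq _ _ _ qr)).
move=> /= eq_route.
have [[/branch_inj h1 [/hub_inj ss' /(congr1 (@nat_of_ord _)) h2]] | [/eqP]] :=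
  inner_inj _ _ _ _ _ _ (branch_hub _ _) (branch_hub _ _) (route_inner s qr) eq_route;
  last by rewrite (negPf (branch_hub _ _)).
subst s'.
have hr := route_pos_range s q; have hr' := route_pos_range s q'.
move: h2; rewrite /= !inordK; try lia; move=> h2.
rewrite (@route_pos_inj s q q') //; move: h1 h2.
by case: (route_pos s q); case: (route_pos s q') => /= ? ? ? ? -> ->.
Qed.

Lemma route_rel u v : sdv_rel u v -> edge (route u) (route v).
Proof.
have [_ first _ hedge _ _] := hpi.
have edge_start j (s : sub_edges (complete_graph m)) :
    edge (beta (branch j)) (pi (branch j) (hub s) (inord 1)).
  by rewrite -(first _ _ (branch_hub j s)); apply: hedge => //; rewrite inordK.
have branch_rel i s (q : 'I_(r + r).+1) :
    ((i == (val s).1) && (q == 0 :> nat)) || ((i == (val s).2) && (q == (r + r).+1.-1 :> nat)) ->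
    edge (route (inl i)) (route (inr (s, q))).
  case/orP => /andP [/eqP -> /eqP q0].
    by rewrite route_first ?q0 //; exact: edge_start.
  by rewrite route_second ?q0 ?leq_addr //= subSn // subnn; exact: edge_start.
case: u => [i | [s q]]; case: v => [i' | [s' q']] //=.
- exact: branch_rel.
- by rewrite edgeC; exact: branch_rel.
case/andP => /eqP <- /eqP qq'.
have := ltn_ord q'; case: (leqP q' r) => hq' lt_q'.
  rewrite !route_first; try lia.
  by apply: hedge; [exact: branch_hub | rewrite !inordK /=; lia].
rewrite !route_second; try lia.
by rewrite edgeC; apply: hedge; [exact: branch_hub | rewrite !inordK /=; lia].
Qed.

Lemma subdivided_complete_subgraph (S : {set vert G}) :
  (forall i, beta (branch i) \in S) -> (forall i s q, pi (branch i) (hub s) q \in S) ->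
  subgraph (subdivision (complete_graph m) (r + r).+1) (induced S).
Proof.
move=> betaS piS.
have routeS v : route v \in S by case: v => [i | [s q]]; [exact: betaS | exact: piS].
exists (fun v => Sub (route v) (routeS v)); split.
  by move=> u v /(congr1 val) /route_inj.
move=> u v; rewrite edge_induced edge_subdivision => /orP [] /route_rel //.
by rewrite edgeC.
Qed.

End SubdividedComplete.

Lemma subpoly_cst1 : subpoly (fun _ => 1).
Proof.
move=> eps eps_gt0; exists 1 => n n_gt0.
have n_ge1 : Rle 1 (INR n) by apply: (le_INR 1); apply/leP.
apply: (Rle_trans _ (Rpower (INR n) 0)); first by rewrite Rpower_O /=; lra.
by apply: Rle_Rpower => //; lra.
Qed.

Lemma INR_expn m e : INR (m ^ e) = pow (INR m) e.
Proof. by elim: e => [|e IH]; rewrite ?expn0 // expnS -multE mult_INR IH. Qed.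

Lemma subpoly_pow_le f a : subpoly f -> 0 < a ->
  exists n0, forall n, n0 <= n -> f n ^ a <= n.
Proof.
move=> fsub a_gt0.
have a_pos : Rlt 0 (INR a) by apply: lt_0_INR; apply/ltP.
have [n0 hn0] := fsub _ (Rinv_0_lt_compat _ a_pos).
exists (maxn n0 1) => n; rewrite geq_max => /andP [n0n n_gt0].
have n_pos : Rlt 0 (INR n) by apply: lt_0_INR; apply/ltP.
apply/leP; apply: INR_le; rewrite INR_expn.
have -> : INR n = pow (Rpower (INR n) (/ INR a)) a.
  rewrite -Rpower_pow; last exact: exp_pos.
  by rewrite Rpower_mult Rinv_l ?Rpower_1 //; lra.
by apply: pow_incr; split; [exact: pos_INR | exact: hn0].
Qed.

Lemma uniform_subdivision G r k m N beta pi (col : vert G -> 'I_N) :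
  @path_system G r k beta pi -> 0 < k ->
  2 ^ m.+1 * m.+1 ^ 2 * (N ^ r.+2) ^ m.+1 <= k ->
  exists t : 'I_r.+2 -> 'I_N,
    subgraph (subdivision (complete_graph m) (r + r).+1) (induced [set v | col v \in codom t]).
Proof.
move=> hpi k_gt0 hk.
pose t0 : {ffun 'I_r.+2 -> 'I_N} := [ffun=> col (beta (Ordinal k_gt0))].
have := @bipartite_monochromatic k m _ t0 (fun x b => [ffun i => col (pi x b i)]).
rewrite card_ffun !card_ord => /(_ hk) [t [A [B [cardA cardB hAB]]]].
have [branch [branch_inj branchA]] : exists f : 'I_m -> 'I_k, injective f /\ forall i, f i \in A.
  by apply: injection_into_set; rewrite card_ord cardA.
have [hub [hub_inj hubB]] : exists f : sub_edges (complete_graph m) -> 'I_k,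
    injective f /\ forall s, f s \in B.
  apply: injection_into_set; apply: leq_trans cardB.
  by rewrite card_sig; apply: leq_trans (max_card _) _; rewrite card_prod !card_ord.
have col_path i b q : b \in B -> col (pi (branch i) b q) = t q.
  by move=> bB; have [_ <-] := hAB _ _ (branchA i) bB; rewrite ffunE.
exists (fun q => t q); apply: (subdivided_complete_subgraph hpi branch_inj hub_inj).
- by move=> i s; have [] := hAB _ _ (branchA i) (hubB s).
- move=> i; have /card_gt0P [b bB] : 0 < #|B|.
    by apply: leq_trans cardB; rewrite muln_gt0 andbb (leq_ltn_trans _ (ltn_ord i)).
  have [nib _] := hAB _ _ (branchA i) bB.
  by rewrite inE -(path_first hpi nib) col_path // codom_f.
- by move=> i s q; rewrite inE col_path // codom_f.
Qed.

Lemma mul_leq_of_cube c x k d : x ^ 3 <= k * k * d -> c ^ 3 * d < k -> c * x <= k.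
Proof.
move=> hx hk; rewrite leqNgt; apply/negP => lt_k.
have : k ^ 3 < c ^ 3 * x ^ 3 by rewrite -expnMn ltn_exp2r.
have := leq_mul (leqnn (c ^ 3)) hx.
rewrite !(expnS, expn0); nia.
Qed.

Lemma Pi_star_ND_clique_bounded C r : Pi_star ND C -> exists b,
  forall H G, C G -> subgraph (subdivision H r) G -> clique_number H <= b.
Proof.
case=> hC /(_ r.+2 isT) [f [_ [f_sub [D [[_ [fw hfw]] decomp]]]]].
pose m := (fw (r + r).+1).+1; pose c := 2 ^ m.+1 * m.+1 ^ 2; pose a := r.+2 * m.+1.
have [n0 hn0] := subpoly_pow_le f_sub (isT : 0 < 3 * a).
exists (maxn n0 (c ^ 3 * r.+3)) => H G CG sub; rewrite leqNgt; apply/negP.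
have [S [beta [pi [cardS hpi]]]] := subdivided_clique_paths sub.
set k := clique_number H in cardS beta pi hpi * => large.
have [N [col [hN hD]]] := decomp _ (hC _ _ CG (induced_subgraph_induced S)).
have k_le : k <= Defs.order (induced S) := path_system_order hpi.
(* [N ^ a] is the [m + 1]-st power of the number of colour tuples; it is
   small because the restricted graph has order at most [k^2 (r + 3)]. *)
have hNa : (N ^ a) ^ 3 <= k * k * r.+3.
  rewrite -expnM mulnC; apply: leq_trans (leq_expn2r _ hN) _.
  by rewrite -order_induced in cardS; apply: leq_trans cardS; apply: hn0; lia.
have hk : 2 ^ m.+1 * m.+1 ^ 2 * (N ^ r.+2) ^ m.+1 <= k.
  by rewrite -expnM; apply: mul_leq_of_cube hNa _; lia.
have [t sub'] := uniform_subdivision col hpi (leq_ltn_trans (leq0n _) large) hk.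
by have := hfw _ _ _ (hD t) sub'; have := clique_number_complete m; lia.
Qed.

Lemma Pi_star_ND C : Pi_star ND C -> ND C.
Proof.
move=> hC; split; first by case: hC.
have /choice [fw hfw] := fun r => Pi_star_ND_clique_bounded r hC.
by exists fw.
Qed.

Lemma ND_Pi_star (C : gclass) : ND C -> Pi_star ND C.
Proof.
case=> hC ndC; split => // p _.
exists (fun _ => 1); split; first by [].
split; first exact: subpoly_cst1.
exists C; split=> // G CG; exists 1, (fun _ => ord0); split => // idx.
exact: hC CG (induced_subgraph_induced _).
Qed.

Theorem mainTheorem6 : decomposition_horizon ND.
Proof. by move=> C; split; [exact: Pi_star_ND | exact: ND_Pi_star]. Qed.
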